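(* Let $Q$ be a Moufang loop. Then $xa^{-3}\cdot a^3y=T_a^{-1}(T_a(x)T_a(y))$ for all $a,x,y\in Q$, where $T_a=R_a^{-1}L_a$.
   Context: A loop is a magma with identity in which the left translations $L_a(y)=ay$ and right translations $R_a(y)=ya$ are bijections; it is Moufang if it satisfies $xy\cdot zx=(x\cdot yz)x$ (Moufang loops are power associative, so $a^{\pm3}$ are defined). *)

From mathcomp Require Import ssreflect ssrfun ssrbool.

Set Implicit Arguments.
Unset Strict Implicit.

(* A loop (Q, mul, e): e is a two-sided identity and every left translation
   L_a = mul a and right translation R_a = mul ^~ a is a bijection.  We record
   the bijections together with their (necessarily unique) inverse maps:
   ldiv a = L_a^{-1} and rdiv ^~ a = R_a^{-1}. *)
Definition is_loop (Q : Type) (mul : Q -> Q -> Q) (e : Q)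
    (ldiv rdiv : Q -> Q -> Q) : Prop :=
  [/\ (forall x, mul e x = x), (forall x, mul x e = x),
      (forall a, cancel (mul a) (ldiv a) /\ cancel (ldiv a) (mul a)) &
      (forall a, cancel (mul ^~ a) (rdiv ^~ a) /\ cancel (rdiv ^~ a) (mul ^~ a))].

Definition moufang_law (Q : Type) (mul : Q -> Q -> Q) : Prop :=
  forall x y z, mul (mul x y) (mul z x) = mul (mul x (mul y z)) x.

Section Ops.
Variables (Q : Type) (mul : Q -> Q -> Q) (e : Q) (ldiv rdiv : Q -> Q -> Q).

(* a^3 (well defined in a Moufang loop by power associativity) *)
Definition cube (a : Q) : Q := mul a (mul a a).
(* two-sided inverse in a Moufang loop: the unique y with a y = e *)
Definition linv (a : Q) : Q := ldiv a e.
Definition invcube (a : Q) : Q := linv (cube a).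
Definition T (a x : Q) : Q := rdiv (mul a x) a.
Definition Tinv (a x : Q) : Q := ldiv a (mul x a).
End Ops.

From mathcomp Require Import ssreflect ssrfun ssrbool.

Set Implicit Arguments.

(* The Moufang law yields flexibility and the inverse properties, hence the
   left and right Bol identities.  These split T_a^{-1}(u v) as
   (((a^-1 u) a^-1) a^-1) (a (a (v a))); for u = T_a x and v = T_a y the two
   factors collapse to x a^-3 and a^3 y. *)

Declare Scope loop_scope.

Section MoufangLoop.

Variables (Q : Type) (mul : Q -> Q -> Q) (e : Q) (ldiv rdiv : Q -> Q -> Q).
Hypothesis loopQ : is_loop mul e ldiv rdiv.
Hypothesis moufangQ : moufang_law mul.

Local Notation "x * y" := (mul x y) : loop_scope.
Local Notation "x ^-1" := (linv e ldiv x) : loop_scope.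
Local Open Scope loop_scope.

Lemma mul1q x : e * x = x.
Proof. by case: loopQ. Qed.

Lemma mulq1 x : x * e = x.
Proof. by case: loopQ. Qed.

Lemma ldiv_mulK a x : ldiv a (a * x) = x.
Proof. by case: loopQ => _ _ /(_ a) []. Qed.

Lemma mul_ldivK a x : a * ldiv a x = x.
Proof. by case: loopQ => _ _ /(_ a) []. Qed.

Lemma rdiv_mulK a x : rdiv (x * a) a = x.
Proof. by case: loopQ => _ _ _ /(_ a) []. Qed.

Lemma mul_rdivK a x : rdiv x a * a = x.
Proof. by case: loopQ => _ _ _ /(_ a) []. Qed.

Lemma mulqI a : injective (mul a).
Proof. exact: can_inj (ldiv_mulK a). Qed.

Lemma mulIq a : injective (mul^~ a).
Proof. exact: (can_inj (g := rdiv^~ a) (rdiv_mulK a)). Qed.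

Lemma flexible x z : x * (z * x) = (x * z) * x.
Proof. by have := moufangQ x e z; rewrite mulq1 mul1q. Qed.

Lemma mulqV x : x * x^-1 = e.
Proof. exact: mul_ldivK. Qed.

Lemma mulVKq x z : x * (x^-1 * z) = z.
Proof.
apply: (@mulIq x); have := moufangQ x x^-1 z.
by rewrite mulqV mul1q => <-.
Qed.

Lemma mulKq x z : x^-1 * (x * z) = z.
Proof. by apply: (@mulqI x); rewrite mulVKq. Qed.

Lemma mulqK x z : (z * x) * x^-1 = z.
Proof.
have := moufangQ x^-1 (x * z) x.
by rewrite mulKq mulqV mulq1 -(flexible x z) mulKq => <-.
Qed.

Lemma mulqKV x z : (z * x^-1) * x = z.
Proof. by apply: (@mulIq x^-1); rewrite mulqK. Qed.

Lemma invqM x y : (x * y)^-1 = y^-1 * x^-1.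
Proof.
have invxy_x : (x * y)^-1 * x = y^-1.
  by have := mulKq (x * y) y^-1; rewrite mulqK.
by rewrite -invxy_x mulqK.
Qed.

Lemma ldivE a z : ldiv a z = a^-1 * z.
Proof. by rewrite -{2}(mul_ldivK a z) mulKq. Qed.

Lemma rdivE a z : rdiv z a = z * a^-1.
Proof. by rewrite -{2}(mul_rdivK a z) mulqK. Qed.

Lemma bol_left b w t : ((b * w) * b) * t = b * (w * (b * t)).
Proof.
have moufang_t := moufangQ b (w * (b * t)) (b * t)^-1.
rewrite mulqK in moufang_t.
by rewrite -moufang_t invqM !mulqKV.
Qed.

Lemma bol_right u b w : u * ((b * w) * b) = ((u * b) * w) * b.
Proof.
have moufang_u := moufangQ b (u * b)^-1 (u * b * w).
rewrite mulKq in moufang_u.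
by rewrite -moufang_u invqM !mulVKq.
Qed.

Lemma invq_cube a : (cube mul a)^-1 = cube mul a^-1.
Proof. by rewrite /cube !invqM flexible. Qed.

Lemma mul_cubel a y : cube mul a * y = a * (a * (a * y)).
Proof. by rewrite /cube flexible bol_left. Qed.

Lemma mul_cuber x a : x * cube mul a = ((x * a) * a) * a.
Proof. by rewrite /cube flexible bol_right. Qed.

Lemma TE a x : T mul rdiv a x = (a * x) * a^-1.
Proof. exact: rdivE. Qed.

Lemma TinvE a z : Tinv mul ldiv a z = a^-1 * (z * a).
Proof. exact: ldivE. Qed.

Lemma Tinv_mul a u v :
  Tinv mul ldiv a (u * v) = (((a^-1 * u) * a^-1) * a^-1) * (a * (a * (v * a))).
Proof.
have right_split : (u * v) * a = (u * a^-1) * ((a * v) * a).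
  by rewrite bol_right mulqKV.
have left_split s : a^-1 * ((u * a^-1) * s) = ((a^-1 * (u * a^-1)) * a^-1) * (a * s).
  by rewrite bol_left mulKq.
by rewrite TinvE right_split left_split flexible -(flexible a v).
Qed.

Lemma mulV_T a x : a^-1 * T mul rdiv a x = x * a^-1.
Proof. by rewrite TE flexible mulKq. Qed.

Lemma mul_TK a y : T mul rdiv a y * a = a * y.
Proof. by rewrite TE mulqKV. Qed.

End MoufangLoop.

Theorem proposition1p9 (Q : Type) (mul : Q -> Q -> Q) (e : Q)
    (ldiv rdiv : Q -> Q -> Q) :
  is_loop mul e ldiv rdiv -> moufang_law mul ->
  forall a x y : Q,
    mul (mul x (invcube mul e ldiv a)) (mul (cube mul a) y) =
    Tinv mul ldiv a (mul (T mul rdiv a x) (T mul rdiv a y)).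
Proof.
move=> loopQ moufangQ a x y.
rewrite (Tinv_mul loopQ moufangQ) (mulV_T loopQ moufangQ) (mul_TK loopQ moufangQ).
by rewrite -(mul_cuber loopQ moufangQ) -(mul_cubel loopQ moufangQ)
  /invcube (invq_cube loopQ moufangQ).
Qed.
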